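(* For every $\mathcal S\in\mathrm{TP}(n)$, the polyhedral cone in $\mathbb{R}^{\binom{[n]}{2}}$ defined by the system $F_{\mathcal S}$ is exactly $K_{\mathcal S}=\mathbb{R}(1,\dots,1)^T+\mathrm{cone}\{-v_C: C\in\mathcal S^\circ\}$.
   Context: A rooted tree on leaf set $[n]$ has leaves labeled bijectively by $[n]$ and internal vertices each with at least two children; a clade is the set of leaves below an internal vertex, and $\mathrm{clade}(T)$ is the set of clades (including $[n]$). $\mathrm{TP}(n)$ is the collection of sets $\mathcal S=\mathrm{clade}(T_1)\cup\mathrm{clade}(T_2)$ for rooted trees $T_1,T_2$ on leaf set $[n]$; $\mathcal S^\circ=\mathcal S\setminus\{[n]\}$. For $C\subseteq[n]$, $v_C\in\mathbb{R}^{\binom{[n]}{2}}$ is the characteristic vector of $\binom{C}{2}$. The clade intersection poset $\mathrm{cip}(\mathcal S)$ consists of $\mathcal S$ together with all intersections of elements of $\mathcal S$ having at least two elements, ordered by inclusion; $\mathrm{cip}(\mathcal S)^\circ=\mathrm{cip}(\mathcal S)\setminus\{[n]\}$. It is a join-semilattice; $A\vee B$ denotes the join (least element containing both). For a pair $i\ne j$, $\overline{ij}$ is the smallest element of $\mathrm{cip}(\mathcal S)$ containing $\{i,j\}$; every $C\in\mathrm{cip}(\mathcal S)$ equals $\overline{ij}$ for some pair, and for each $C$ we write $\delta_C:=\delta_{ij}$ for a fixed such pair $ij$. For $C\in\mathrm{cip}(\mathcal S)^\circ$, its parents $D_1,\dots,D_r$ are the elements of $\mathrm{cip}(\mathcal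 S)$ covering $C$; set $D_\emptyset=C$ and $D_I=\bigvee_{i\in I}D_i$ for nonempty $I\subseteq[r]$. The system $F_{\mathcal S}$ on $\delta\in\mathbb{R}^{\binom{[n]}{2}}$ consists of: (a) $\delta_{ij}=\delta_{kl}$ whenever $\overline{ij}=\overline{kl}$; (b) for each $C\in\mathcal S^\circ$ with parents $D_1,\dots,D_r$, the inequality $\sum_{I\subseteq[r]}(-1)^{|I|}\delta_{D_I}\le 0$; (c) for each $C\in\mathrm{cip}(\mathcal S)\setminus\mathcal S$ with parents $D_1,\dots,D_r$, the equation $\sum_{I\subseteq[r]}(-1)^{|I|}\delta_{D_I}=0$. *)

From HB Require Import structures.
From mathcomp Require Import all_boot all_order all_algebra.
Set Implicit Arguments. Unset Strict Implicit. Unset Printing Implicit Defensive.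
Import Order.TTheory GRing.Theory Num.Theory.

(* A (plane representation of a) rooted tree: a leaf carries a label,
   an internal vertex carries the list of its children.  The order of the
   children is irrelevant for everything below. *)
Inductive rtree (n : nat) : Type :=
| Leaf : 'I_n -> rtree n
| Node : seq (rtree n) -> rtree n.

Arguments Leaf {n}.
Arguments Node {n}.

Section Trees.
Variable n : nat.

Fixpoint leaves (t : rtree n) : seq 'I_n :=
  match t with
  | Leaf i => [:: i]
  | Node ts => flatten (map leaves ts)
  end.

Fixpoint wf_tree (t : rtree n) : bool :=
  match t with
  | Leaf _ => true
  | Node ts => (2 <= size ts) && all wf_tree ts
  end.

Definition is_tree_on (t : rtree n) : Prop :=
  wf_tree t /\ perm_eq (leaves t) (enum 'I_n).

Fixpoint clade_list (t : rtree n) : seq {set 'I_n} :=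
  match t with
  | Leaf _ => [::]
  | Node ts => [set x in leaves t] :: flatten (map clade_list ts)
  end.

Definition clade (t : rtree n) : {set {set 'I_n}} := [set C in clade_list t].

Definition cip (S : {set {set 'I_n}}) : {set {set 'I_n}} :=
  S :|: [set C : {set 'I_n} | (2 <= #|C|) &&
          [exists F : {set {set 'I_n}},
             [&& F != set0, F \subset S & C == \bigcap_(D in F) D]]].

(* least element of cip(S) containing U (default setT if none exists) *)
Definition cip_lub (S : {set {set 'I_n}}) (U : {set 'I_n}) : {set 'I_n} :=
  odflt setT [pick D in cip S | (U \subset D) &&
      [forall E in cip S, (U \subset E) ==> (D \subset E)]].

Definition parents (S : {set {set 'I_n}}) (C : {set 'I_n}) : {set {set 'I_n}} :=
  [set D in cip S | (C \proper D) &&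
     [forall E in cip S, ~~ ((C \proper E) && (E \proper D))]].

Definition DI (S : {set {set 'I_n}}) (C : {set 'I_n}) (I : {set {set 'I_n}})
  : {set 'I_n} :=
  if I == set0 then C else cip_lub S (\bigcup_(D in I) D).

End Trees.

Notation pairT n := {A : {set 'I_n} | #|A| == 2%N}.

Section System.
Variables (R : realFieldType) (n : nat).
Local Open Scope ring_scope.

Definition vC (C : {set 'I_n}) (p : pairT n) : R :=
  if val p \subset C then 1 else 0.

(* delta_C := delta_{ij} for a fixed pair {i,j} with overline{ij} = C *)
Definition deltaC (S : {set {set 'I_n}}) (d : pairT n -> R) (C : {set 'I_n}) : R :=
  match [pick p : pairT n | cip_lub S (val p) == C] with
  | Some p => d p
  | None => 0
  end.

Definition altsum (S : {set {set 'I_n}}) (d : pairT n -> R) (C : {set 'I_n}) : R :=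
  \sum_(I in powerset (parents S C)) (-1) ^+ #|I| * deltaC S d (DI S C I).

Definition F_system (S : {set {set 'I_n}}) (d : pairT n -> R) : Prop :=
  [/\ (forall p q : pairT n, cip_lub S (val p) = cip_lub S (val q) -> d p = d q),
      (forall C, C \in S :\ setT -> altsum S d C <= 0) &
      (forall C, C \in cip S :\: S -> altsum S d C = 0)].

Definition in_K (S : {set {set 'I_n}}) (d : pairT n -> R) : Prop :=
  exists (lam : R) (mu : {set 'I_n} -> R),
    (forall C, C \in S :\ setT -> 0 <= mu C) /\
    (forall p, d p = lam - \sum_(C in S :\ setT) mu C * vC C p).

End System.

(* F_S is Moebius inversion on the clade intersection poset cip(S).  For C and E
   in cip(S) the crosscut identity
     sum_(I subset of the parents of C) (-1)^|I| [D_I subset E] = [E = C]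
   shows that the alternating sum of (b) and (c), applied to an upper sum
   delta_D = sum_(E in cip(S), D subset E) g(E), returns g(C); conversely, by downward
   induction, a function on cip(S) is determined by its value at [n] and these sums.
   The points of K_S are exactly the upper sums with g([n]) = lambda, g = -mu <= 0 on
   S° and g = 0 on cip(S) \ S, which is what (b) and (c) say.
   Reading delta_C off a pair needs every C in cip(S) to be some overline{ij}.  For two
   trees take the smallest clades A of T1 and B of T2 containing C, and i, j in C lying
   together neither in a clade strictly inside A nor in one strictly inside B: every
   clade containing i and j then contains C. *)

Set Warnings "-notation-overridden,-ambiguous-paths".
From HB Require Import structures.
From mathcomp Require Import all_boot all_order all_algebra.
From Stdlib Require List.
Set Implicit Arguments. Unset Strict Implicit. Unset Printing Implicit Defensive.
Import Order.TTheory GRing.Theory Num.Theory.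

Lemma sum_powerset_sign (R : pzRingType) (T : finType) (A : {set T}) :
  (\sum_(I in powerset A) (-1) ^+ #|I| = (A == set0)%:R :> R)%R.
Proof.
have [->|A0] := eqVneq A set0; first by rewrite powerset0 big_set1 cards0 expr0.
have /set0Pn[a Aa] := A0.
pose toggle (I : {set T}) := if a \in I then I :\ a else a |: I.
have toggleK : involutive toggle.
  move=> I; rewrite /toggle; case: (boolP (a \in I)) => aI.
    by rewrite setD11 setD1K.
  by rewrite setU11 setU1K.
have toggle_sign I : ((-1) ^+ #|toggle I| = - (-1) ^+ #|I| :> R)%R.
  rewrite /toggle; case: ifP => aI; last by rewrite cardsU1 aI exprS mulN1r.
  by rewrite -{2}(setD1K aI) cardsU1 !inE eqxx exprS mulN1r opprK.
have toggle_sub I : (toggle I \subset A) = (I \subset A).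
  rewrite /toggle; case: ifP => aI; last by rewrite subUset sub1set Aa.
  by rewrite -{2}(setD1K aI) subUset sub1set Aa.
have toggle_in I : (a \in toggle I) = (a \notin I).
  by rewrite /toggle; case: ifP => aI; rewrite !inE ?eqxx ?aI.
rewrite (bigID (fun I : {set T} => a \in I)) /= (reindex_inj (inv_inj toggleK)) /=.
apply/eqP; rewrite addr_eq0 -sumrN; apply/eqP/eq_big => I; last by rewrite toggle_sign.
by rewrite !powersetE toggle_sub toggle_in.
Qed.

Lemma exists_unrelated2 (T : Type) (e1 e2 : rel T) (P : pred T) :
    symmetric e1 -> transitive e1 -> symmetric e2 -> transitive e2 ->
    forall x1 y1 x2 y2, P x1 -> P y1 -> P x2 -> P y2 -> ~~ e1 x1 y1 -> ~~ e2 x2 y2 ->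
  exists i j, [/\ P i, P j, ~~ e1 i j & ~~ e2 i j].
Proof.
move=> sym1 tr1 sym2 tr2 x1 y1 x2 y2 Px1 Py1 Px2 Py2 n1 n2.
have [k [Pk nk]] : exists k, P k /\ ~~ e2 x1 k.
  have [e12 | ] := boolP (e2 x1 x2); last by exists x2.
  by exists y2; split=> //; apply: contra n2 => e12'; apply: (tr2 x1); rewrite // sym2.
have [e2xy | ] := boolP (e2 x1 y1); last by exists x1, y1.
have [e1xk | ] := boolP (e1 x1 k); last by exists x1, k.
exists y1, k; split=> //.
  by apply: contra n1 => e1yk; apply: (tr1 k); rewrite // sym1.
by apply: contra nk; exact: tr2 e2xy.
Qed.

Lemma set_seq_cat (T : finType) (s1 s2 : seq T) :
  [set:: s1 ++ s2] = [set:: s1] :|: [set:: s2].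
Proof. by apply/setP => x; rewrite !inE mem_cat. Qed.

Section CladeIntersectionPoset.
Variables (n : nat) (S : {set {set 'I_n}}).
Hypothesis S_setT : setT \in S.
Hypothesis S_card : forall C, C \in S -> 1 < #|C|.
Variable R : pzRingType.
Implicit Types (C D E U : {set 'I_n}) (I F : {set {set 'I_n}}).

Lemma mem_cip C : C \in S -> C \in cip S.
Proof. by rewrite inE => ->. Qed.

Lemma cip_setT : setT \in cip S.
Proof. exact: mem_cip. Qed.

Lemma cip_card C : C \in cip S -> 1 < #|C|.
Proof. by rewrite inE => /orP[/S_card // | ]; rewrite inE => /andP[]. Qed.

Lemma cip_bigcap E : E \in cip S ->
  exists2 F : {set {set 'I_n}}, F \subset S & E = \bigcap_(D in F) D.
Proof.
rewrite inE => /orP[ES | ]; first by exists [set E]; rewrite ?sub1set ?big_set1.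
by rewrite inE => /andP[_ /existsP[F /and3P[_ FS /eqP ->]]]; exists F.
Qed.

Lemma cip_lubP U : 1 < #|U| ->
  cip_lub S U \in cip S /\
  forall E, E \in cip S -> (cip_lub S U \subset E) = (U \subset E).
Proof.
move=> U2; rewrite /cip_lub; case: pickP => [D /and3P[Dcip UD /forall_inP Dmin] | none].
  split=> // E Ecip; apply/idP/idP => [DE | UE]; first exact: subset_trans UD DE.
  exact: implyP (Dmin E Ecip) UE.
pose M := \bigcap_(X in [set X in S | U \subset X]) X.
have UM : U \subset M by apply/bigcapsP => X; rewrite inE => /andP[].
have Mcip : M \in cip S.
  rewrite !inE (leq_trans U2 (subset_leq_card UM)); apply/orP; right; apply/existsP.
  exists [set X in S | U \subset X]; rewrite eqxx andbT; apply/andP; split.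
    by apply/set0Pn; exists setT; rewrite inE S_setT subsetT.
  by apply/subsetP => X; rewrite inE => /andP[].
suff Mmin : [forall E in cip S, (U \subset E) ==> (M \subset E)].
  by have := none M; rewrite Mcip UM Mmin.
apply/forall_inP => E /cip_bigcap[F FS ->]; apply/implyP => UE.
apply/bigcapsP => X XF; apply: bigcap_inf; rewrite inE (subsetP FS _ XF).
by apply: subset_trans UE _; apply: bigcap_inf.
Qed.

Lemma parentsP C D : D \in parents S C -> D \in cip S /\ C \proper D.
Proof. by rewrite inE => /and3P[]. Qed.

Lemma parent_below C E : E \in cip S -> C \proper E ->
  exists2 D, D \in parents S C & D \subset E.
Proof.
move=> Ecip CE; pose between X := [&& X \in cip S, C \proper X & X \subset E].
have Ebetween : between E by rewrite /between Ecip CE subxx.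
have [D /and3P[Dcip CD DE] Dmin] := arg_minnP (fun X : {set 'I_n} => #|X|) Ebetween.
exists D => //; rewrite inE Dcip CD; apply/forall_inP => X Xcip; apply/negP => /andP[CX XD].
have := Dmin X; rewrite /between Xcip CX (subset_trans (proper_sub XD) DE) leqNgt.
by rewrite (proper_card XD) => /(_ isT).
Qed.

Lemma DI_lubP C I : I \subset parents S C -> I != set0 ->
  DI S C I \in cip S /\
  forall E, E \in cip S -> (DI S C I \subset E) = (I \subset powerset E).
Proof.
move=> IP I0; rewrite /DI (negPf I0); have /set0Pn[D DinI] := I0.
have [Dcip _] := parentsP (subsetP IP _ DinI).
have U2 : 1 < #|\bigcup_(X in I) X|.
  exact: leq_trans (cip_card Dcip) (subset_leq_card (bigcup_sup _ DinI)).
have [lub_cip lub_subE] := cip_lubP U2; split=> // E Ecip.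
rewrite lub_subE //; apply/bigcupsP/subsetP => sub X XI; first by rewrite powersetE sub.
by have := sub X XI; rewrite powersetE.
Qed.

Lemma DI_cip C I : C \in cip S -> I \subset parents S C -> DI S C I \in cip S.
Proof.
move=> Ccip IP; have [-> | I0] := eqVneq I set0; first by rewrite /DI eqxx.
by have [] := DI_lubP IP I0.
Qed.

Lemma DI_subE C I E : I \subset parents S C -> E \in cip S -> C \subset E ->
  (DI S C I \subset E) = (I \subset powerset E).
Proof.
move=> IP Ecip CE; have [-> | I0] := eqVneq I set0; first by rewrite /DI eqxx sub0set.
by have [_ ->] := DI_lubP IP I0.
Qed.

Lemma DI_proper C I : I \subset parents S C -> I != set0 -> C \proper DI S C I.
Proof.
move=> IP I0; have [DIcip DI_sub] := DI_lubP IP I0; have /set0Pn[D DinI] := I0.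
have [_ CD] := parentsP (subsetP IP _ DinI).
apply: proper_sub_trans CD _; have := subxx (DI S C I); rewrite DI_sub //.
by move/subsetP/(_ D DinI); rewrite powersetE.
Qed.

Lemma sub_DI C I : I \subset parents S C -> C \subset DI S C I.
Proof.
move=> IP; have [-> | I0] := eqVneq I set0; first by rewrite /DI eqxx.
exact: proper_sub (DI_proper IP I0).
Qed.

Lemma sum_parents_sign_DI_sub C E : E \in cip S ->
  (\sum_(I in powerset (parents S C)) (-1) ^+ #|I| * (DI S C I \subset E)%:R
    = (E == C)%:R :> R)%R.
Proof.
move=> Ecip; have [CE | notCE] := boolP (C \subset E); last first.
  rewrite big1 => [|I]; last first.
    rewrite powersetE => IP; suff /negPf-> : ~~ (DI S C I \subset E) by rewrite mulr0.
    by apply: contra notCE; apply: subset_trans (sub_DI IP).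
  by case: eqP notCE => // ->; rewrite subxx.
transitivity (\sum_(I in powerset (parents S C :&: powerset E)) (-1) ^+ #|I| : R)%R.
  rewrite powersetI; under [RHS]eq_bigl do rewrite inE; rewrite big_mkcondr /=.
  apply: eq_bigr => I; rewrite powersetE => IP; rewrite DI_subE // -powersetE.
  by case: (_ \in _); rewrite ?mulr1 ?mulr0.
rewrite sum_powerset_sign; suff -> : (parents S C :&: powerset E == set0) = (E == C) by [].
apply/eqP/eqP => [noD | ->].
  apply/eqP; apply: contraT => EC; have CpE : C \proper E by rewrite properEneq eq_sym EC.
  have [D DP DE] := parent_below Ecip CpE.
  by move/setP/(_ D): noD; rewrite in_setI powersetE DP DE inE.
apply/setP => X; rewrite in_setI powersetE in_set0; apply/negP => /andP[/parentsP[_ CX] XC].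
by have := proper_sub_trans CX XC; rewrite properxx.
Qed.

Local Open Scope ring_scope.

Definition altsum_of (f : {set 'I_n} -> R) C : R :=
  \sum_(I in powerset (parents S C)) (-1) ^+ #|I| * f (DI S C I).

Lemma eq_altsum_of f1 f2 C : C \in cip S -> {in cip S, f1 =1 f2} ->
  altsum_of f1 C = altsum_of f2 C.
Proof.
move=> Ccip f12; apply: eq_bigr => I; rewrite powersetE => IP.
by rewrite f12 // DI_cip.
Qed.

Lemma altsum_of_upper g C : C \in cip S ->
  altsum_of (fun D => \sum_(E in cip S | D \subset E) g E) C = g C.
Proof.
move=> Ccip; transitivity (\sum_(E in cip S) (E == C)%:R * g E).
  rewrite /altsum_of; under eq_bigr do rewrite big_mkcondr mulr_sumr.
  rewrite exchange_big; apply: eq_bigr => E Ecip.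
  rewrite -(sum_parents_sign_DI_sub C Ecip) mulr_suml; apply: eq_bigr => I _.
  by case: (_ \subset _); rewrite ?mulr1 ?mulr0 ?mul1r ?mul0r.
rewrite (bigD1 C) //= eqxx mul1r big1 ?addr0 // => E /andP[_ /negPf->].
by rewrite mul0r.
Qed.

Lemma altsum_of_inj f1 f2 : f1 setT = f2 setT ->
    (forall C, C \in cip S -> C != setT -> altsum_of f1 C = altsum_of f2 C) ->
  {in cip S, f1 =1 f2}.
Proof.
move=> f12T f12alt D; have [k] := ubnP #|~: D|; elim: k => // k IH in D *.
move=> Dk Dcip; have [-> // | DT] := eqVneq D setT.
have altsum_ofD f : altsum_of f D =
    f D + \sum_(I in powerset (parents S D) | I != set0) (-1) ^+ #|I| * f (DI S D I).
  have DI0 : DI S D set0 = D by rewrite /DI eqxx.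
  by rewrite /altsum_of (bigD1 set0) ?powersetE ?sub0set // DI0 cards0 expr0 mul1r.
have := f12alt D Dcip DT; rewrite !altsum_ofD.
suff -> : \sum_(I in powerset (parents S D) | I != set0) (-1) ^+ #|I| * f1 (DI S D I) =
          \sum_(I in powerset (parents S D) | I != set0) (-1) ^+ #|I| * f2 (DI S D I).
  exact: addIr.
apply: eq_bigr => I /andP[]; rewrite powersetE => IP I0; rewrite IH ?DI_cip //.
by rewrite -ltnS (leq_trans _ Dk) // ltnS proper_card // properC DI_proper.
Qed.

End CladeIntersectionPoset.

Lemma card_pair n (p : pairT n) : 1 < #|val p|.
Proof. by rewrite (eqP (valP p)). Qed.

Section Cone.
Variables (R : realFieldType) (n : nat) (S : {set {set 'I_n}}).
Hypothesis S_setT : setT \in S.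
Hypothesis S_card : forall C, C \in S -> 1 < #|C|.
Implicit Types (C D E : {set 'I_n}) (p q : pairT n) (d : pairT n -> R).
Local Open Scope ring_scope.

Lemma vCE C p : vC R C p = (val p \subset C)%:R.
Proof. by rewrite /vC; case: (_ \subset _). Qed.

Lemma altsumE d C : altsum S d C = altsum_of S (deltaC S d) C.
Proof. by []. Qed.

Lemma deltaC_lub d : (forall p q, cip_lub S (val p) = cip_lub S (val q) -> d p = d q) ->
  forall p, deltaC S d (cip_lub S (val p)) = d p.
Proof.
move=> d_lub p; rewrite /deltaC; case: pickP => [q /eqP/d_lub // | none].
by have := none p; rewrite eqxx.
Qed.

Lemma deltaC_eq d (f : {set 'I_n} -> R) :
    {in cip S, forall D, exists p, cip_lub S (val p) = D} ->
    (forall p, d p = f (cip_lub S (val p))) ->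
  {in cip S, deltaC S d =1 f}.
Proof.
move=> pairs df D /pairs[p <-]; rewrite /deltaC; case: pickP => [q /eqP <- // | none].
by have := none p; rewrite eqxx.
Qed.

Lemma sum_cip_upper (g : {set 'I_n} -> R) D : {in cip S :\: S, forall E, g E = 0} ->
  \sum_(E in cip S | D \subset E) g E =
    g setT + \sum_(C in S :\ setT) g C * (D \subset C)%:R.
Proof.
move=> g0; rewrite (bigD1 setT) ?cip_setT ?subsetT //; congr (_ + _).
rewrite [LHS]big_mkcond [RHS]big_mkcond; apply: eq_bigr => E _.
rewrite in_setD1 andbC; have [ES | notES] := boolP (E \in S).
  by rewrite mem_cip //=; case: (E == setT); case: (D \subset E); rewrite ?mulr1 ?mulr0.
rewrite andbF; have [Ecip | _] := boolP (E \in cip S); last by rewrite /= andbF.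
by rewrite g0 ?in_setD ?Ecip ?notES //; case: ifP.
Qed.

Lemma lub_pairP p : cip_lub S (val p) \in cip S /\
  forall E, E \in cip S -> (cip_lub S (val p) \subset E) = (val p \subset E).
Proof. exact: cip_lubP (card_pair p). Qed.

Theorem in_K_F_system d : {in cip S, forall D, exists p, cip_lub S (val p) = D} ->
  in_K S d -> F_system S d.
Proof.
move=> pairs [lam [mu [mu_ge0 dE]]].
pose g E := if E == setT then lam else if E \in S then - mu E else 0.
pose f D := \sum_(E in cip S | D \subset E) g E.
have g0 : {in cip S :\: S, forall E, g E = 0}.
  move=> E /setDP[_ ES]; rewrite /g (negPf ES); case: eqP => // ET.
  by rewrite ET S_setT in ES.
have df p : d p = f (cip_lub S (val p)).
  have [_ lub_subE] := lub_pairP p.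
  rewrite dE /f sum_cip_upper // /g eqxx -sumrN; congr (_ + _); apply: eq_bigr => C.
  by rewrite in_setD1 => /andP[CT CS]; rewrite (negPf CT) CS lub_subE ?mem_cip // vCE mulNr.
have alt_g C : C \in cip S -> altsum S d C = g C.
  move=> Ccip; rewrite altsumE (eq_altsum_of S_setT S_card Ccip (deltaC_eq pairs df)).
  exact: altsum_of_upper.
split.
- by move=> p q pq; rewrite !df pq.
- move=> C CS; have /setD1P[CT CinS] := CS.
  by rewrite alt_g ?mem_cip // /g (negPf CT) CinS oppr_le0 mu_ge0.
- by move=> C /setDP[Ccip CS]; rewrite alt_g // g0 // inE CS.
Qed.

Theorem F_system_in_K d : F_system S d -> in_K S d.
Proof.
move=> [d_lub alt_le0 alt0].
pose h E := if E == setT then deltaC S d setT else altsum S d E.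
pose f D := \sum_(E in cip S | D \subset E) h E.
have h0 : {in cip S :\: S, forall E, h E = 0}.
  move=> E EcipS; have /setDP[_ ES] := EcipS; rewrite /h; case: eqP => [ET | _].
    by rewrite ET S_setT in ES.
  exact: alt0.
have deltaC_f : {in cip S, deltaC S d =1 f}.
  apply: (altsum_of_inj S_setT S_card) => [|C Ccip CT].
    rewrite /f sum_cip_upper // big1 ?addr0 => [|C]; first by rewrite /h eqxx.
    by rewrite in_setD1 subTset => /andP[/negPf-> _]; rewrite mulr0.
  by rewrite altsum_of_upper // /h (negPf CT).
exists (deltaC S d setT), (fun C => - altsum S d C); split.
  by move=> C CS; rewrite oppr_ge0 alt_le0.
move=> p; have [lub_cip lub_subE] := lub_pairP p.
rewrite -(deltaC_lub d_lub) deltaC_f // /f sum_cip_upper // /h eqxx -sumrN.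
congr (_ + _); apply: eq_bigr => C; rewrite in_setD1 => /andP[CT CS].
by rewrite (negPf CT) lub_subE ?mem_cip // vCE mulNr opprK.
Qed.

End Cone.

Section Laminar.
Variable n : nat.
Implicit Types (A D X Y : {set 'I_n}) (F : {set {set 'I_n}}).

Definition laminar F :=
  {in F &, forall X Y, ~~ [disjoint X & Y] -> (X \subset Y) || (Y \subset X)}.

Lemma laminar_meet F X Y i : laminar F -> X \in F -> Y \in F ->
  i \in X -> i \in Y -> (X \subset Y) || (Y \subset X).
Proof.
move=> lamF XF YF iX iY; apply: lamF => //.
by apply/negP => /disjointFr/(_ iX); rewrite iY.
Qed.

Definition same_block F A : rel 'I_n :=
  fun x y => (x == y) || [exists X in F, [&& X \proper A, x \in X & y \in X]].

Lemma same_block_sym F A : symmetric (same_block F A).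
Proof.
move=> x y; rewrite /same_block eq_sym; congr (_ || _).
by apply: eq_existsb => X; rewrite [(x \in X) && _]andbC.
Qed.

Lemma same_block_trans F A : laminar F -> transitive (same_block F A).
Proof.
move=> lamF y x z /orP[/eqP-> // | /exists_inP[X XF /and3P[XA xX yX]]].
case/orP=> [/eqP<- | /exists_inP[Y YF /and3P[YA yY zY]]]; apply/orP; right; apply/exists_inP.
  by exists X; rewrite // XA xX.
case/orP: (laminar_meet lamF XF YF yX yY) => [XY | YX].
  by exists Y; rewrite // YA (subsetP XY _ xX).
by exists X; rewrite // XA xX (subsetP YX _ zY).
Qed.

Lemma minimal_cover F D : setT \in F -> laminar F -> D != set0 ->
  exists2 A, A \in F & D \subset A /\ forall X, X \in F -> D \subset X -> A \subset X.
Proof.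
move=> FT lamF /set0Pn[x xD].
pose covers X := (X \in F) && (D \subset X).
have coverT : covers setT by rewrite /covers FT subsetT.
have [A /andP[AF DA] Amin] := arg_minnP (fun X : {set 'I_n} => #|X|) coverT.
exists A => //; split=> // X XF DX.
have [// | XA] := orP (laminar_meet lamF AF XF (subsetP DA _ xD) (subsetP DX _ xD)).
by rewrite (_ : X = A) //; apply/eqP; rewrite eqEcard XA Amin // /covers XF.
Qed.

Lemma split_pair F D A : laminar F -> 1 < #|D| -> D \subset A ->
    (forall X, X \in F -> D \subset X -> A \subset X) ->
  exists x y, [/\ x \in D, y \in D & ~~ same_block F A x y].
Proof.
move=> lamF D2 DA Amin.
have [/forall_inP all_same | ] := boolP [forall x in D, forall y in D, same_block F A x y];
  last by move=> /forall_inPn[x xD /forall_inPn[y yD nxy]]; exists x, y.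
have [i [j [iD jD ij]]] := card_gt1P D2.
have block_i y : y \in D -> y != i ->
    exists2 X, X \in F & [&& X \proper A, i \in X & y \in X].
  move=> yD yi; have := forall_inP (all_same i iD) y yD.
  by rewrite /same_block eq_sym (negPf yi) => /exists_inP.
pose inner X := [&& X \in F, X \proper A & i \in X].
have [X0 X0F /and3P[X0A iX0 _]] : exists2 X, X \in F & [&& X \proper A, i \in X & j \in X].
  by apply: block_i; rewrite // eq_sym.
have X0inner : inner X0 by rewrite /inner X0F X0A iX0.
have [M /and3P[MF MA iM] Mmax] := arg_maxnP (fun X : {set 'I_n} => #|X|) X0inner.
suff DM : D \subset M by have := proper_sub_trans MA (Amin M MF DM); rewrite properxx.
apply/subsetP => y yD; have [-> // | yi] := eqVneq y i.
have [X XF /and3P[XA iX yX]] := block_i y yD yi.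
case/orP: (laminar_meet lamF MF XF iM iX) => [MX | XM]; last exact: subsetP XM _ yX.
rewrite (_ : M = X) //; apply/eqP; rewrite eqEcard MX.
by apply: Mmax; rewrite /inner XF XA iX.
Qed.

Lemma split_pair_cover F A D X i j : laminar F -> A \in F -> D \subset A -> i \in D ->
  X \in F -> i \in X -> j \in X -> ~~ same_block F A i j -> D \subset X.
Proof.
move=> lamF AF DA iD XF iX jX nij.
have [XA | AX] := orP (laminar_meet lamF XF AF iX (subsetP DA _ iD)); last first.
  exact: subset_trans DA AX.
suff -> : X = A by [].
apply/eqP; apply: contraNT nij => XnA; apply/orP; right; apply/exists_inP.
by exists X; rewrite // properEneq XnA XA iX jX.
Qed.

Lemma cip_pair_lub (S1 S2 : {set {set 'I_n}}) D :
    setT \in S1 -> setT \in S2 -> laminar S1 -> laminar S2 ->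
    (forall C, C \in S1 :|: S2 -> 1 < #|C|) -> D \in cip (S1 :|: S2) ->
  exists p : pairT n, cip_lub (S1 :|: S2) (val p) = D.
Proof.
move=> T1 T2 lam1 lam2 S_card Dcip; have ST : setT \in S1 :|: S2 by rewrite inE T1.
have D2 := cip_card S_card Dcip; have D0 : D != set0 by rewrite -card_gt0 ltnW.
have [A AS1 [DA Amin]] := minimal_cover T1 lam1 D0.
have [B BS2 [DB Bmin]] := minimal_cover T2 lam2 D0.
have [x1 [y1 [x1D y1D n1]]] := split_pair lam1 D2 DA Amin.
have [x2 [y2 [x2D y2D n2]]] := split_pair lam2 D2 DB Bmin.
have [i [j [iD jD nij1 nij2]]] := exists_unrelated2 (P := fun x => x \in D)
  (same_block_sym S1 A) (same_block_trans (A := A) lam1) (same_block_sym S2 B)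
  (same_block_trans (A := B) lam2) x1D y1D x2D y2D n1 n2.
have ij : i != j by apply: contra nij1 => /eqP->; rewrite /same_block eqxx.
have ij2 : #|[set i; j]| == 2 by rewrite cards2 ij.
exists (Sub [set i; j] ij2 : pairT n) => /=.
have [lub_cip lub_subE] := cip_lubP ST (card_pair (Sub [set i; j] ij2 : pairT n)).
apply/eqP; rewrite eqEsubset lub_subE // subUset !sub1set iD jD /=.
have := subxx (cip_lub (S1 :|: S2) [set i; j]); rewrite lub_subE // subUset !sub1set.
case/andP=> iL jL; have [F FS Fcap] := cip_bigcap lub_cip; rewrite Fcap in iL jL *.
apply/bigcapsP => X XF; have /bigcapP/(_ X XF) iX := iL; have /bigcapP/(_ X XF) jX := jL.
have /setUP[XS1 | XS2] := subsetP FS _ XF.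
  exact: split_pair_cover lam1 AS1 DA iD XS1 iX jX nij1.
exact: split_pair_cover lam2 BS2 DB iD XS2 iX jX nij2.
Qed.

End Laminar.

Section Trees.
Variable n : nat.
Implicit Types (t : rtree n) (ts : seq (rtree n)).
Implicit Types (U V : {set 'I_n}) (F G : {set {set 'I_n}}).

Fixpoint rtree_nested_ind (P : rtree n -> Prop) (P_leaf : forall i, P (Leaf i))
    (P_node : forall ts, (forall t, List.In t ts -> P t) -> P (Node ts)) t : P t :=
  match t with
  | Leaf i => P_leaf i
  | Node ts => P_node ts ((fix all_P ts : forall t, List.In t ts -> P t :=
      match ts with
      | [::] => fun t no_t => False_ind _ no_t
      | t' :: ts' => fun t t_in =>
          match t_in with
          | or_introl t'_t => eq_ind t' P (rtree_nested_ind P_leaf P_node t') t t'_t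
          | or_intror t_in' => all_P ts' t t_in'
          end
      end) ts)
  end.

Definition hierarchy U F :=
  laminar F /\ forall C, C \in F -> C \subset U /\ 1 < #|C|.

Lemma hierarchy0 U : hierarchy U set0.
Proof. by split=> [X Y | C]; rewrite inE. Qed.

Lemma hierarchyU U V F G : [disjoint U & V] -> hierarchy U F -> hierarchy V G ->
  hierarchy (U :|: V) (F :|: G).
Proof.
move=> UV [lamF subF] [lamG subG].
have disjFG X Y : X \in F -> Y \in G -> [disjoint X & Y].
  by move=> /subF[XU _] /subG[YV _]; exact: disjointW XU YV UV.
split=> [X Y | C]; last first.
  by case/setUP=> [/subF | /subG] [CU C2]; rewrite C2 (subset_trans CU) // ?subsetUl ?subsetUr.
case/setUP=> [XF | XG] /setUP[YF | YG] XY; first exact: lamF.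
- by case/negP: XY; exact: disjFG.
- by case/negP: XY; rewrite disjoint_sym; exact: disjFG.
- exact: lamG.
Qed.

Lemma hierarchyU1 U F : 1 < #|U| -> hierarchy U F -> hierarchy U (U |: F).
Proof.
move=> U2 [lamF subF]; split=> [X Y | C]; last by case/setU1P=> [-> | /subF].
case/setU1P=> [-> | XF] /setU1P[-> | YF]; rewrite ?subxx //.
- by have [YU _] := subF Y YF; rewrite YU orbT.
- by have [XU _] := subF X XF; rewrite XU.
- exact: lamF.
Qed.

Lemma leaves_nonempty t : wf_tree t -> leaves t != [::].
Proof.
elim/rtree_nested_ind: t => [// | [|t ts] IH //= /andP[_ /andP[wf_t _]]].
by rewrite -size_eq0 size_cat addn_eq0 size_eq0 negb_and (IH t) ?wf_t //; left.
Qed.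

Lemma card_leaves_node ts : wf_tree (Node ts) -> uniq (leaves (Node ts)) ->
  1 < #|[set:: leaves (Node ts)]|.
Proof.
rewrite cardsE => /andP[ts2 wf_ts] /card_uniqP->.
case: ts ts2 wf_ts => [|t1 [|t2 ts]] //= _ /and3P[wf1 wf2 _]; rewrite !size_cat.
move: (leaves_nonempty wf1) (leaves_nonempty wf2).
case: (leaves t1) => [|a1 l1] // _; case: (leaves t2) => [|a2 l2] // _.
by rewrite /= addSn ltnS addnS.
Qed.

Lemma hierarchy_clade t : wf_tree t -> uniq (leaves t) ->
  hierarchy [set:: leaves t] (clade t).
Proof.
elim/rtree_nested_ind: t => [i _ _ | ts IH wf_node uniq_node]; first exact: hierarchy0.
rewrite /clade [clade_list _]/= set_cons; apply: hierarchyU1; first exact: card_leaves_node.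
move: wf_node uniq_node => /= /andP[_]; elim: ts IH => [|t ts IHts] IH /=.
  by rewrite !set_nil => _ _; exact: hierarchy0.
move=> /andP[wf_t wf_ts]; rewrite cat_uniq => /and3P[uniq_t disj uniq_ts].
rewrite !set_seq_cat; apply: hierarchyU.
- rewrite -setI_eq0; apply/eqP/setP => x; rewrite !inE; apply/negP => /andP[xt xts].
  by case/negP: disj; apply/hasP; exists x.
- exact: IH t (or_introl erefl) wf_t uniq_t.
- exact: IHts (fun t' t'_in => IH t' (or_intror t'_in)) wf_ts uniq_ts.
Qed.

Lemma clade_tree_on (T : rtree n) : is_tree_on T -> 1 < n ->
  [/\ setT \in clade T, laminar (clade T) & forall C, C \in clade T -> 1 < #|C|].
Proof.
move=> [wfT permT] n2; have uniqT : uniq (leaves T) by rewrite (perm_uniq permT) enum_uniq.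
have leavesT : [set:: leaves T] = setT.
  by apply/setP => x; rewrite !inE (perm_mem permT) mem_enum.
have [lamT subT] := hierarchy_clade wfT uniqT; split=> // [|C /subT[] //].
case: T leavesT {wfT permT uniqT lamT subT} => [i | ts] leavesT.
  have := cardsT 'I_n; rewrite -leavesT set_seq1 cards1 card_ord => n1.
  by rewrite -n1 in n2.
by rewrite /clade inE -leavesT; exact: mem_head.
Qed.

End Trees.

Lemma no_pairs_le1 n : n <= 1 -> pairT n -> False.
Proof.
move=> n1 p; have := leq_trans (card_pair p) (subset_leq_card (subsetT (val p))).
by rewrite cardsT card_ord ltnNge n1.
Qed.

Lemma F_system_in_K_no_pairs (R : realFieldType) n (S : {set {set 'I_n}})
    (d : pairT n -> R) :
  (pairT n -> False) -> F_system S d /\ in_K S d.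
Proof.
move=> no_pair; have deltaC0 D : deltaC S d D = 0%R.
  by rewrite /deltaC; case: pickP => [p _ | //]; case: (no_pair p).
have alt0 C : altsum S d C = 0%R.
  by rewrite /altsum big1 // => I _; rewrite deltaC0 mulr0.
split; first by split=> [p | C _ | C _]; rewrite ?alt0 //; case: (no_pair p).
by exists 0%R, (fun=> 0%R); split=> // p; case: (no_pair p).
Qed.


Theorem proposition3p12 (R : realFieldType) (n : nat) (T1 T2 : rtree n) :
  is_tree_on T1 -> is_tree_on T2 ->
  forall d : pairT n -> R,
    F_system (clade T1 :|: clade T2) d <-> in_K (clade T1 :|: clade T2) d.
Proof.
move=> T1_tree T2_tree d.
have [n_le1 | n_gt1] := leqP n 1.
  by have [? ?] := F_system_in_K_no_pairs (clade T1 :|: clade T2) d (no_pairs_le1 n_le1).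
have [T1_setT lam1 card1] := clade_tree_on T1_tree n_gt1.
have [T2_setT lam2 card2] := clade_tree_on T2_tree n_gt1.
have S_setT : setT \in clade T1 :|: clade T2 by rewrite inE T1_setT.
have S_card C : C \in clade T1 :|: clade T2 -> 1 < #|C|.
  by case/setUP=> [/card1 | /card2].
split; first exact: F_system_in_K.
by apply: in_K_F_system => // D; exact: cip_pair_lub.
Qed.
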